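(* Every semi-complete digraph with $n$ vertices that has a feedback arc set of size at most $k$ has at most $A\cdot\exp(C\sqrt{2k})\cdot(n+1)$ $k$-cuts, where $C=\pi\sqrt{2/3}$ and $A$ is a constant such that $p(m)\le\frac{A}{m+1}\exp(C\sqrt{m})$ for all integers $m\ge0$.
   Context: A simple digraph (no loops, no multiple arcs) $T$ is semi-complete if for every pair of distinct vertices $v,w$ at least one of $(v,w),(w,v)$ is an arc. A feedback arc set is a set $F\subseteq E(T)$ with $T\setminus F$ acyclic. A $k$-cut of a digraph $T$ is an ordered partition $(X,Y)$ of $V(T)$ (either part may be empty) such that there are at most $k$ arcs $(u,v)\in E(T)$ with $u\in Y$ and $v\in X$. $p(m)$ denotes the number of partitions of the integer $m$ (multisets of positive integers summing to $m$); such a constant $A$ exists by the Hardy–Ramanujan estimate. *)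

From mathcomp Require Import all_boot.
From Stdlib Require Import Reals.
Set Implicit Arguments. Unset Strict Implicit. Unset Printing Implicit Defensive.

(* A digraph on a finite vertex type T is given by its arc relation E : rel T
   (a relation automatically excludes multiple arcs). *)

Definition loopless (T : finType) (E : rel T) : Prop := forall v, ~~ E v v.

Definition semicomplete (T : finType) (E : rel T) : Prop :=
  loopless E /\ forall v w : T, v != w -> E v w || E w v.

Definition acyclic (T : finType) (E : rel T) : Prop :=
  forall (x : T) (p : seq T), path E x p -> last x p = x -> p = [::].

Definition remove_arcs (T : finType) (E : rel T) (F : {set T * T}) : rel T :=
  fun x y => E x y && ((x, y) \notin F).

Definition feedback_arc_set (T : finType) (E : rel T) (F : {set T * T}) : Prop :=
  (forall a, a \in F -> E a.1 a.2) /\ acyclic (remove_arcs E F).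

Definition back_arcs (T : finType) (E : rel T) (X Y : {set T}) : nat :=
  #|[set a : T * T | [&& E a.1 a.2, a.1 \in Y & a.2 \in X]]|.

(* k-cuts: ordered partitions (X, Y) of V(T); such a partition is determined
   by X, with Y = ~: X. *)
Definition kcuts (T : finType) (E : rel T) (k : nat) : {set {set T}} :=
  [set X : {set T} | back_arcs E X (~: X) <= k].

(* p(m): number of partitions of m, i.e. multisets of positive integers summing
   to m, encoded by multiplicity functions f (f i = number of parts equal to i,
   for 1 <= i <= m; every multiplicity is <= m), with f 0 = 0. *)
Definition npartitions (m : nat) : nat :=
  #|[set f : {ffun 'I_m.+1 -> 'I_m.+1} |
      (nat_of_ord (f ord0) == 0) && (\sum_(i < m.+1) i * f i == m)]|.

Definition Cconst : R := (PI * sqrt (2 / 3))%R.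

From mathcomp Require Import all_boot.
From mathcomp Require Import zify.
From Stdlib Require Import Reals Lra.
Set Implicit Arguments. Unset Strict Implicit. Unset Printing Implicit Defensive.

(* Let F be a feedback arc set with |F| <= k and let s be an enumeration of
   the vertices that is a topological order of E \ F.  For a cut (X, ~: X),
   an inversion is a pair u before x in s with u outside X and x in X.  Every
   inversion (u, x) is witnessed either by a backward arc (u, x) of the cut or,
   by semi-completeness, by an arc (x, u) of F; hence a k-cut has at most 2k
   inversions.  A set X is determined by |X| and by its profile: the number of
   vertices outside X followed by exactly i members of X, for each i > 0.
   Since the weighted sum of the profile is the number m <= 2k of inversions,
   padding it with 2k - m parts equal to 1 turns it into a partition of 2k;
   so X is encoded injectively by (|X|, m, partition of 2k), giving
   #|kcuts| <= (n + 1) (2k + 1) p(2k). *)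

Lemma sum_trunc (g : nat -> nat) L N : (forall i, L <= i -> g i = 0) -> L <= N ->
  \sum_(i < N) g i = \sum_(i < L) g i.
Proof.
move=> g0 LN; rewrite -(subnKC LN) big_split_ord /= [X in _ + X]big1 ?addn0 // => i _.
by apply: g0; rewrite leq_addr.
Qed.

Lemma sum_indicator (c N : nat) : \sum_(i < N) (c == i : nat) = (c < N).
Proof.
elim: N => [|N IH]; first by rewrite big_ord0.
by rewrite big_ord_recr /= IH ltnS leq_eqVlt; case: (ltngtP c N) => //=; lia.
Qed.

Lemma sum_weighted_indicator (c N : nat) :
  \sum_(i < N) i * (c == i : nat) = (c < N) * c.
Proof.
elim: N => [|N IH]; first by rewrite big_ord0.
by rewrite big_ord_recr /= IH ltnS leq_eqVlt; case: (ltngtP c N) => //=; lia.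
Qed.

Section Profiles.
Variable T : finType.
Implicit Types (X Y : {set T}) (s : seq T) (u v : T).

Definition members_after X s v := count (mem X) (drop (index v s).+1 s).

(* profile X s i: how many vertices of s outside X are followed by exactly i
   members of X.  Together with #|X| it determines X (profile_determines). *)
Definition profile X s i :=
  count (fun v => (v \notin X) && (members_after X s v == i)) s.

Fixpoint inversions X s :=
  if s is u :: s' then (if u \in X then 0 else count (mem X) s') + inversions X s'
  else 0.

Lemma profile_cons X u s i : u \notin s ->
  profile X (u :: s) i = ((u \notin X) && (count (mem X) s == i)) + profile X s i.
Proof.
move=> us; rewrite /profile /= /members_after /= eqxx /= drop0; congr (_ + _).
apply: eq_in_count => v vs /=.
by have -> : (u == v) = false by apply: contraNF us => /eqP ->.
Qed.

(* No vertex can be followed by more members of X than s contains. *)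
Lemma profile_eq0 X s i : uniq s -> count (mem X) s < i -> profile X s i = 0.
Proof.
elim: s => [|u s IH] //= /andP [us uniq_s] lt_i.
have lt_i' : count (mem X) s < i by move: lt_i; case: (u \in X) => /=; lia.
by rewrite profile_cons // IH // addn0 ltn_eqF // andbF.
Qed.

Lemma sum_profile X s N : uniq s -> count (mem X) s < N ->
  \sum_(i < N) profile X s i = count (predC (mem X)) s.
Proof.
elim: s => [|u s IH] /=; first by rewrite big1.
move=> /andP [us uniq_s] lt_N.
under eq_bigr => i _ do rewrite profile_cons //.
rewrite big_split /= IH //; last by move: lt_N; case: (u \in X) => /=; lia.
case uX: (u \in X) => /=; first by rewrite big1.
by rewrite sum_indicator; move: lt_N; rewrite uX /= => ->.
Qed.

Lemma wsum_profile X s N : uniq s -> count (mem X) s < N ->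
  \sum_(i < N) i * profile X s i = inversions X s.
Proof.
elim: s => [|u s IH] /=; first by rewrite big1 // => i _; rewrite muln0.
move=> /andP [us uniq_s] lt_N.
under eq_bigr => i _ do rewrite profile_cons // mulnDr.
rewrite big_split /= IH //; last by move: lt_N; case: (u \in X) => /=; lia.
case uX: (u \in X) => /=; first by rewrite big1 // => i _; rewrite muln0.
by rewrite sum_weighted_indicator; move: lt_N; rewrite uX /= => ->; lia.
Qed.

Lemma profile_weight_le X s i : uniq s -> i * profile X s i <= inversions X s.
Proof.
move=> uniq_s; set N := (maxn i (count (mem X) s)).+1.
have lt_iN : i < N by rewrite ltnS leq_maxl.
rewrite -(@wsum_profile X s N) // ?ltnS ?leq_maxr //.
by rewrite (bigD1 (Ordinal lt_iN)) //= leq_addr.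
Qed.

Lemma profile_eq0_inv X s i : uniq s -> inversions X s < i -> profile X s i = 0.
Proof.
move=> uniq_s lt_i; have := profile_weight_le X i uniq_s.
by case: (profile X s i) => // c; nia.
Qed.

Lemma wsum_profile_inv X s N : uniq s -> inversions X s < N ->
  \sum_(i < N) i * profile X s i = inversions X s.
Proof.
move=> uniq_s lt_N; set N' := maxn N (count (mem X) s).+1.
have vanish i : (inversions X s).+1 <= i -> i * profile X s i = 0.
  by move=> lt_i; rewrite profile_eq0_inv ?muln0.
pose g i := i * profile X s i.
rewrite (@sum_trunc g _ N vanish lt_N).
rewrite -(@sum_trunc g _ N' vanish (leq_trans lt_N (leq_maxl _ _))).
by rewrite wsum_profile // leq_maxr.
Qed.

Lemma profile_determines s X Y : uniq s ->
  count (mem X) s = count (mem Y) s -> (forall i, profile X s i = profile Y s i) ->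
  {in s, X =i Y}.
Proof.
elim: s X Y => [|u s IH] X Y //= /andP [us uniq_s] same_count same_prof.
have head_out (Z Z' : {set T}) : u \in Z -> u \notin Z' ->
    count (mem Z) (u :: s) = count (mem Z') (u :: s) ->
    profile Z (u :: s) (count (mem Z') s) != profile Z' (u :: s) (count (mem Z') s).
  move=> uZ uZ' /=; rewrite uZ (negbTE uZ') /= => eqc.
  rewrite !profile_cons // uZ uZ' eqxx (@profile_eq0 Z) //; lia.
have uXY : (u \in X) = (u \in Y).
  case uX: (u \in X); case uY: (u \in Y) => //.
  - by have /eqP[] := head_out X Y uX (negbT uY) same_count.
  - by have /eqP[] := head_out Y X uY (negbT uX) (esym same_count); rewrite same_prof.
have same_count_s : count (mem X) s = count (mem Y) s.
  by move: same_count => /=; rewrite uXY; lia.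
have same_prof_s i : profile X s i = profile Y s i.
  by have := same_prof i; rewrite !profile_cons // uXY same_count_s => /addnI.
move=> v; rewrite inE => /orP [/eqP -> //|]; exact: IH.
Qed.

Lemma inversions_le_witnesses (X : {set T}) (B : {set T * T}) (s : seq T) :
  uniq s -> pairwise (fun u x => (u \notin X) ==> (x \in X) ==> ((u, x) \in B)) s ->
  inversions X s <= #|[set p in B | (p.1 \in s) && (p.2 \in s)]|.
Proof.
elim: s => [|u s IH] //= /andP [us uniq_s] /andP [/allP head_ok tail_ok].
set Old := [set p in B | (p.1 \in s) && (p.2 \in s)].
set New := [set p in B | (p.1 \in u :: s) && (p.2 \in u :: s)].
have OldNew : Old \subset New.
  by apply/subsetP => p; rewrite !inE => /and3P [-> -> ->]; rewrite !orbT.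
case: ifP => uX; first by rewrite add0n (leq_trans (IH uniq_s tail_ok)) ?subset_leq_card.
pose Fresh := [set (u, x) | x in [seq x <- s | x \in X]].
have card_Fresh : #|Fresh| = count (mem X) s.
  rewrite card_imset; last by move=> a b [].
  by rewrite (card_uniqP (filter_uniq _ uniq_s)) size_filter.
have Fresh_new : Fresh \subset New.
  apply/subsetP => q /imsetP [x]; rewrite mem_filter => /andP [xX xs] -> {Fresh card_Fresh}.
  by move: (head_ok x xs); rewrite !inE /= eqxx xs uX xX /= orbT andbT.
have Old_Fresh : Old :&: Fresh = set0.
  apply/setP => p; rewrite !inE; apply/negbTE/andP => [[/andP [_ /andP [p1s _]]]].
  by case/imsetP => x _ def_p; rewrite def_p /= (negbTE us) in p1s.
apply: (@leq_trans (#|Old| + count (mem X) s)); first by rewrite addnC leq_add2r IH.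
by rewrite -card_Fresh -cardsUI Old_Fresh cards0 addn0 subset_leq_card // subUset OldNew.
Qed.

End Profiles.

Section TopologicalOrder.
Variables (T : finType) (R : rel T).
Hypothesis acyclic_R : acyclic R.

Definition ancestors (v : T) : {set T} := [set w | connect R w v].

(* Along an arc of an acyclic relation the set of ancestors grows strictly,
   since the tail is an ancestor of the head but not conversely. *)
Lemma ancestors_grow w v : R w v -> #|ancestors w| < #|ancestors v|.
Proof.
move=> Rwv; apply/proper_card/properP; split.
  by apply/subsetP => x; rewrite !inE => /connect_trans; apply; exact: connect1.
exists v; rewrite !inE ?connect0 //; apply/negP => /connectP [p Rp last_p].
have := @acyclic_R v (rcons p v); rewrite rcons_path Rp -last_p Rwv last_rcons.
by move=> /(_ isT erefl); case: p {Rp last_p}.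
Qed.

Definition topological (s : seq T) : bool := pairwise (fun u w => ~~ R w u) s.

(* Every acyclic relation on a finite type has a topological enumeration:
   sort the vertices by their number of ancestors. *)
Lemma topological_enumeration :
  exists s, [/\ uniq s, forall v, v \in s & topological s].
Proof.
pose by_ancestors := [rel a b | #|ancestors a| <= #|ancestors b|].
exists (sort by_ancestors (enum T)); split.
- by rewrite sort_uniq enum_uniq.
- by move=> v; rewrite mem_sort mem_enum.
- have := sort_sorted (fun a b => leq_total #|ancestors a| #|ancestors b|) (enum T).
  rewrite sorted_pairwise; last by move=> b a c; exact: leq_trans.
  apply: sub_pairwise => u w /= le_uw; apply/negP => /ancestors_grow.
  by rewrite ltnNge le_uw.
Qed.

End TopologicalOrder.

Section CutInversions.
Variables (T : finType) (E : rel T) (F : {set T * T}).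
Hypothesis semicomplete_E : semicomplete E.

(* Arcs explaining the inversions of the cut (X, ~: X): its backward arcs and
   the reversed arcs of F. *)
Definition cut_witnesses (X : {set T}) : {set T * T} :=
  [set a | [&& E a.1 a.2, a.1 \in ~: X & a.2 \in X]] :|: [set (q.2, q.1) | q in F].

Lemma card_cut_witnesses (X : {set T}) :
  #|cut_witnesses X| <= back_arcs E X (~: X) + #|F|.
Proof. exact: leq_trans (leq_card_setU _ _) (leq_add (leqnn _) (leq_imset_card _ _)). Qed.

(* In a topological order of E \ F, an inversion (u, x) not witnessed by the
   arc (u, x) forces the arc (x, u), which must then belong to F. *)
Lemma topological_inversions_witnessed (X : {set T}) (s : seq T) :
  topological (remove_arcs E F) s ->
  pairwise (fun u x => (u \notin X) ==> (x \in X) ==> ((u, x) \in cut_witnesses X)) s.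
Proof.
apply: sub_pairwise => u x /= no_back_arc; apply/implyP => uX; apply/implyP => xX.
have ux : u != x by apply: contraNneq uX => ->.
rewrite !inE uX xX andbT /=.
have [_ /(_ u x ux)] := semicomplete_E; case: (E u x) => //= Exu.
apply/imsetP; exists (x, u) => //.
by move: no_back_arc; rewrite /remove_arcs Exu negbK.
Qed.

Lemma kcut_few_inversions k (X : {set T}) (s : seq T) :
  #|F| <= k -> uniq s -> topological (remove_arcs E F) s ->
  X \in kcuts E k -> inversions X s <= 2 * k.
Proof.
move=> card_F uniq_s top; rewrite inE => few_back_arcs.
apply: leq_trans (inversions_le_witnesses uniq_s (topological_inversions_witnessed X top)) _.
have sub : [set p in cut_witnesses X | (p.1 \in s) && (p.2 \in s)] \subset cut_witnesses X.
  by apply/subsetP => p; rewrite inE => /andP [].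
have := leq_trans (subset_leq_card sub) (card_cut_witnesses X); lia.
Qed.

End CutInversions.

Definition partition_set (m : nat) : {set {ffun 'I_m.+1 -> 'I_m.+1}} :=
  [set f : {ffun 'I_m.+1 -> 'I_m.+1} |
    (nat_of_ord (f ord0) == 0) && (\sum_(i < m.+1) i * f i == m)].

Section Encoding.
Variables (T : finType) (s : seq T) (M : nat).
Hypotheses (uniq_s : uniq s) (s_all : forall v, v \in s).
Implicit Types X Y : {set T}.

Lemma count_enum X : count (mem X) s = #|X|.
Proof.
rewrite -size_filter -(card_uniqP (filter_uniq _ uniq_s)).
by apply: eq_card => x; rewrite mem_filter s_all andbT.
Qed.

(* The part of the profile at 0 is determined by #|X| and the rest, so
   #|X| and the positive part of the profile determine X. *)
Lemma set_of_profile X Y : #|X| = #|Y| ->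
  (forall i, 0 < i -> profile X s i = profile Y s i) -> X = Y.
Proof.
move=> same_card same_prof.
have total Z : \sum_(i < #|T|.+1) profile Z s i = size s - #|Z|.
  rewrite sum_profile // ?count_enum ?ltnS ?max_card //.
  by rewrite -(count_predC (mem Z) s) count_enum addKn.
have same_prof0 : profile X s 0 = profile Y s 0.
  have shifted :
      \sum_(i < #|T|) profile X s (bump 0 i) = \sum_(i < #|T|) profile Y s (bump 0 i).
    by apply: eq_bigr => i _; apply: same_prof; rewrite /bump add1n.
  by have := total Y; rewrite -same_card -total !big_ord_recl /= shifted => /addIn.
apply/setP => v; apply: (profile_determines uniq_s) => //; first by rewrite !count_enum.
by case=> [|i] //; apply: same_prof.
Qed.

Definition padded_profile X (i : nat) : nat :=
  if i == 0 then 0 else profile X s i + (i == 1) * (M - inversions X s).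

Lemma padded_profile_le X i : inversions X s <= M -> padded_profile X i <= M.
Proof.
move=> few; rewrite /padded_profile; case: eqP => // /eqP i_gt0.
have := profile_weight_le X i uniq_s.
by case: eqP => [-> | /eqP i_neq1] /=; nia.
Qed.

Lemma padded_profile_wsum X : inversions X s <= M ->
  \sum_(i < M.+1) i * padded_profile X i = M.
Proof.
move=> few.
have split_term (i : 'I_M.+1) :
    i * padded_profile X i = i * profile X s i + i * (1 == i : nat) * (M - inversions X s).
  by rewrite /padded_profile (eq_sym 1%N); case: eqP => [-> | _] //=; rewrite mulnDr mulnA.
rewrite (eq_bigr _ (fun i _ => split_term i)) big_split /= wsum_profile_inv //.
by rewrite -big_distrl /= sum_weighted_indicator /=; lia.
Qed.

(* The encoding; inord truncates, harmlessly, as all components are in range. *)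
Definition encode X : 'I_#|T|.+1 * 'I_M.+1 * {ffun 'I_M.+1 -> 'I_M.+1} :=
  (inord #|X|, inord (inversions X s), [ffun i : 'I_M.+1 => inord (padded_profile X i)]).

Lemma encode_partition X : inversions X s <= M -> (encode X).2 \in partition_set M.
Proof.
move=> few; rewrite inE ffunE inordK //=; apply/eqP.
rewrite -[RHS](padded_profile_wsum few); apply: eq_bigr => i _.
by rewrite ffunE inordK // ltnS padded_profile_le.
Qed.

Lemma encode_inj : {in [set X | inversions X s <= M] &, injective encode}.
Proof.
move=> X Y; rewrite !inE => fewX fewY [same_card same_inv same_pad].
move/(congr1 (@nat_of_ord _)): same_card; rewrite !inordK ?ltnS ?max_card // => same_card.
move/(congr1 (@nat_of_ord _)): same_inv; rewrite !inordK ?ltnS // => same_inv.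
apply: set_of_profile => // i i_gt0.
have [iM | Mi] := leqP i M; last by rewrite !profile_eq0_inv // ?same_inv; lia.
pose entry (f : {ffun 'I_M.+1 -> 'I_M.+1}) := nat_of_ord (f (Ordinal (iM : i < M.+1))).
move/(congr1 entry): same_pad.
rewrite /entry !ffunE !inordK ?ltnS ?padded_profile_le //.
by rewrite /padded_profile /= gtn_eqF // same_inv => /addIn.
Qed.

Lemma card_few_inversions :
  #|[set X | inversions X s <= M]| <= #|T|.+1 * M.+1 * npartitions M.
Proof.
rewrite -(card_in_imset encode_inj).
apply: leq_trans (subset_leq_card (_ : _ \subset setX [set: _] (partition_set M))) _.
  apply/subsetP => c /imsetP [X]; rewrite inE => few ->.
  by rewrite in_setX in_setT encode_partition.
by rewrite cardsX cardsT card_prod !card_ord.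
Qed.

End Encoding.

Theorem card_kcuts (T : finType) (E : rel T) (k : nat) :
  semicomplete E -> (exists F : {set T * T}, feedback_arc_set E F /\ #|F| <= k) ->
  #|kcuts E k| <= #|T|.+1 * (2 * k).+1 * npartitions (2 * k).
Proof.
move=> semicomplete_E [F [[_ acyclic_rest] card_F]].
have [s [uniq_s s_all top]] := topological_enumeration acyclic_rest.
apply: leq_trans (card_few_inversions (2 * k) uniq_s s_all).
apply/subset_leq_card/subsetP => X kcut_X; rewrite inE.
exact: kcut_few_inversions top kcut_X.
Qed.

Lemma scaled_partition_bound (A e : R) (n m p : nat) :
  (INR p <= A / INR (m + 1) * e)%R -> (INR (n.+1 * m.+1 * p) <= A * e * INR (n + 1))%R.
Proof.
rewrite -(addn1 n) -(addn1 m) -!multE !mult_INR => p_bound.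
have q_pos : (0 < INR (m + 1))%R by apply: lt_0_INR; apply/ltP; rewrite addn1.
have n_nonneg := pos_INR (n + 1).
have qp_bound : (INR (m + 1) * INR p <= A * e)%R.
  apply: Rle_trans (Rmult_le_compat_l _ _ _ (Rlt_le _ _ q_pos) p_bound) _.
  by right; field; lra.
rewrite Rmult_assoc (Rmult_comm (A * e)); exact: Rmult_le_compat_l.
Qed.

Unset Implicit Arguments.
Theorem mainTheorem9 (A : R)
  (hA : forall m : nat,
     (INR (npartitions m) <= A / INR (m + 1) * exp (Cconst * sqrt (INR m)))%R)
  (T : finType) (E : rel T) (k : nat)
  (hsc : semicomplete E)
  (hfas : exists F : {set T * T}, feedback_arc_set E F /\ #|F| <= k) :
  (INR #|kcuts E k| <= A * exp (Cconst * sqrt (2 * INR k)) * INR (#|T| + 1))%R.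
Proof.
have count_bound := le_INR _ _ (elimT leP (card_kcuts hsc hfas)).
apply: Rle_trans count_bound _.
have -> : (2 * INR k)%R = INR (2 * k) by rewrite -multE mult_INR.
exact: scaled_partition_bound (hA (2 * k)).
Qed.
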